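(* The space $(\mathbb{R}^{\mathbb{Z}_<},\tau_\iota)$ is not connected, and it is a Hausdorff space.
   Context: $\mathbb{R}^{\mathbb{Z}_<}$ is the set of formal series $\sum_{i\ge -k}a_i\epsilon^i$ ($k\in\mathbb{N}\cup\{0\}$, $a_i\in\mathbb{R}$), written $\langle a_{-k},\dots,\widehat{a_0},a_1,\dots\rangle$, with coefficientwise addition, Cauchy-product multiplication and lexicographic order; $|\cdot|$ is the associated absolute value, $d(\mathbf{x},\mathbf{y})=|\mathbf{y}-\mathbf{x}|$, $B_{\mathbf{x}}(\mathbf{y})=\{\mathbf{z}:d(\mathbf{x},\mathbf{z})<\mathbf{y}\}$. For $m\in\mathbb{N}\cup\{0\}$ let $\Delta^m=\{a\epsilon^m: a\in\mathbb{R}\}$ (with $a\neq 0$ when $m\ge1$) and $\Delta^{\downarrow m}=\bigcup_{n\ge m}\Delta^n$. A set $O$ is $\iota$-open iff for every $\mathbf{x}\in O$ there is a positive $\iota\in\Delta^{\downarrow m}$ (for some $m$) with $B_{\mathbf{x}}(\iota)\subseteq O$; $\tau_\iota$ is the topology generated by unions of such $\iota$-balls. *)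

(* the field R^{Z_<} of formal series sum_{i >= -k} a_i eps^i. *)
From Stdlib Require Import Reals ZArith Lra Lia ClassicalEpsilon.
Open Scope R_scope.

Record LC : Type := mkLC {
  coef : Z -> R;
  coef_lb : exists k : Z, forall i : Z, (i < k)%Z -> coef i = 0
}.

Definition LCzero : LC.
Proof. refine (mkLC (fun _ => 0) _). exists 0%Z. reflexivity. Defined.

Definition LCopp (x : LC) : LC.
Proof.
  refine (mkLC (fun i => - coef x i) _).
  destruct (coef_lb x) as [k Hk]. exists k. intros i Hi. rewrite Hk; [lra|lia].
Defined.

Definition LCadd (x y : LC) : LC.
Proof.
  refine (mkLC (fun i => coef x i + coef y i) _).
  destruct (coef_lb x) as [k Hk]. destruct (coef_lb y) as [l Hl].
  exists (Z.min k l). intros i Hi. rewrite Hk by lia. rewrite Hl by lia. lra.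
Defined.

Definition LCsub (x y : LC) : LC := LCadd x (LCopp y).

Definition LCmono (a : R) (n : Z) : LC.
Proof.
  refine (mkLC (fun i => if Z.eqb i n then a else 0) _).
  exists n. intros i Hi. destruct (Z.eqb_spec i n); [lia|reflexivity].
Defined.

Definition LClt (x y : LC) : Prop :=
  exists n : Z, (forall i : Z, (i < n)%Z -> coef x i = coef y i) /\ coef x n < coef y n.

Definition LCabs (x : LC) : LC :=
  if excluded_middle_informative (LClt x LCzero) then LCopp x else x.

Definition LCdist (x y : LC) : LC := LCabs (LCsub y x).
Definition LCball (x r : LC) (z : LC) : Prop := LClt (LCdist x z) r.

Definition is_pos_iota (iota : LC) : Prop :=
  exists (m n : nat) (a : R), (m <= n)%nat /\ ((1 <= n)%nat -> a <> 0)
     /\ iota = LCmono a (Z.of_nat n) /\ LClt LCzero iota.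

Definition iota_open (O : LC -> Prop) : Prop :=
  forall x, O x -> exists iota, is_pos_iota iota /\ (forall z, LCball x iota z -> O z).

Definition iota_connected : Prop :=
  ~ exists U V : LC -> Prop, iota_open U /\ iota_open V /\
      (exists x, U x) /\ (exists x, V x) /\
      (forall x, ~ (U x /\ V x)) /\ (forall x, U x \/ V x).

Definition iota_hausdorff : Prop :=
  forall x y : LC, x <> y -> exists U V : LC -> Prop,
    iota_open U /\ iota_open V /\ U x /\ V y /\ (forall z, ~ (U z /\ V z)).

(* The ball of radius eps^n about x consists of the series that agree with x
   below the index n.  Hence every set that only depends on the coefficients
   below a fixed index is iota-open, and so is its complement: these clopen
   "cylinders" disconnect the space, and two distinct series are separated by
   the cylinders around them at any index past a coefficient where they differ. *)
From Stdlib Require Import Reals ZArith Lra Lia ClassicalEpsilon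
  FunctionalExtensionality ProofIrrelevance Classical.
Open Scope R_scope.

Lemma LC_ext (x y : LC) : (forall i, coef x i = coef y i) -> x = y.
Proof.
  destruct x as [cx px], y as [cy py]; simpl; intros H.
  assert (cx = cy) by (apply functional_extensionality; exact H).
  subst cy. f_equal. apply proof_irrelevance.
Qed.

Lemma LC_neq_coef (x y : LC) : x <> y -> exists i, coef x i <> coef y i.
Proof.
  intros Hxy. apply NNPP. intros Hall. apply Hxy, LC_ext. intros i.
  apply NNPP. intros Hi. apply Hall. exists i. exact Hi.
Qed.

Lemma LClt_asym (x y : LC) : LClt x y -> ~ LClt y x.
Proof.
  intros [n [Hbelow Hn]] [m [Hbelow' Hm]].
  destruct (Z.lt_trichotomy n m) as [Hnm | [<- | Hmn]].
  - rewrite (Hbelow' n Hnm) in Hn. lra.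
  - lra.
  - rewrite (Hbelow m Hmn) in Hm. lra.
Qed.

Lemma LCabs_nonneg (d : LC) : ~ LClt (LCabs d) LCzero.
Proof.
  unfold LCabs. destruct (excluded_middle_informative (LClt d LCzero)) as [Hneg | Hnneg].
  - apply LClt_asym. destruct Hneg as [n [Hbelow Hn]]. exists n. split.
    + intros i Hi. simpl in *. rewrite (Hbelow i Hi). lra.
    + simpl in *. lra.
  - exact Hnneg.
Qed.

Lemma LCabs_coef_eq0 (d : LC) (i : Z) : coef (LCabs d) i = 0 -> coef d i = 0.
Proof.
  unfold LCabs. destruct (excluded_middle_informative (LClt d LCzero)); simpl; lra.
Qed.

(* A nonnegative series below eps^n must vanish below n: its first deviation
   from eps^n cannot occur before n, where it would make the series negative. *)
Lemma LClt_mono1_coef (y : LC) (n : Z) :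
  ~ LClt y LCzero -> LClt y (LCmono 1 n) -> forall i, (i < n)%Z -> coef y i = 0.
Proof.
  intros Hnneg [k [Hbelow Hk]] i Hi. simpl in Hbelow, Hk.
  destruct (Z_lt_le_dec i k) as [Hik | Hki].
  - rewrite (Hbelow i Hik). destruct (Z.eqb_spec i n); [lia | reflexivity].
  - exfalso. apply Hnneg. exists k. split.
    + intros j Hj. rewrite (Hbelow j Hj). simpl. destruct (Z.eqb_spec j n); [lia | reflexivity].
    + destruct (Z.eqb_spec k n); [lia | exact Hk].
Qed.

Lemma LCball_mono1_coef (x z : LC) (n : Z) :
  LCball x (LCmono 1 n) z -> forall i, (i < n)%Z -> coef z i = coef x i.
Proof.
  intros Hball i Hi.
  pose proof (LClt_mono1_coef _ n (LCabs_nonneg _) Hball i Hi) as Hd.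
  apply LCabs_coef_eq0 in Hd. simpl in Hd. lra.
Qed.

Lemma is_pos_iota_mono1 (n : nat) : is_pos_iota (LCmono 1 (Z.of_nat n)).
Proof.
  exists 0%nat, n, 1. split; [lia |]. split; [intros; lra |]. split; [reflexivity |].
  exists (Z.of_nat n). split.
  - intros i Hi. simpl. destruct (Z.eqb_spec i (Z.of_nat n)); [lia | reflexivity].
  - simpl. rewrite Z.eqb_refl. lra.
Qed.

Definition cylinder (N : Z) (x z : LC) : Prop :=
  forall i, (i < N)%Z -> coef z i = coef x i.

Lemma iota_open_cylinder_saturated (N : Z) (P : LC -> Prop) :
  (forall w z, P w -> cylinder N w z -> P z) -> iota_open P.
Proof.
  intros Hsat w Hw. exists (LCmono 1 (Z.of_nat (Z.to_nat N))).
  split; [apply is_pos_iota_mono1 |].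
  intros z Hz. apply (Hsat w); [exact Hw |].
  intros i Hi. apply (LCball_mono1_coef _ _ _ Hz). lia.
Qed.

Lemma iota_open_cylinder (N : Z) (x : LC) : iota_open (cylinder N x).
Proof.
  apply (iota_open_cylinder_saturated N).
  intros w z Hw Hz i Hi. rewrite (Hz i Hi). exact (Hw i Hi).
Qed.

Lemma iota_open_not_cylinder (N : Z) (x : LC) : iota_open (fun z => ~ cylinder N x z).
Proof.
  apply (iota_open_cylinder_saturated N).
  intros w z Hw Hz Hzx. apply Hw. intros i Hi. rewrite <- (Hz i Hi). exact (Hzx i Hi).
Qed.

Lemma cylinder_disjoint (N i : Z) (x y z : LC) :
  (i < N)%Z -> coef x i <> coef y i -> ~ (cylinder N x z /\ cylinder N y z).
Proof.
  intros Hi Hxy [Hx Hy]. apply Hxy. rewrite <- (Hx i Hi). exact (Hy i Hi).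
Qed.

Theorem mainTheorem3 : ~ iota_connected /\ iota_hausdorff.
Proof.
  split.
  - intros Hconn. apply Hconn.
    exists (cylinder 1 LCzero), (fun z => ~ cylinder 1 LCzero z).
    split; [apply iota_open_cylinder |].
    split; [apply iota_open_not_cylinder |].
    split; [exists LCzero; intros i _; reflexivity |].
    split.
    + exists (LCmono 1 0). intros H. specialize (H 0%Z ltac:(lia)). simpl in H. lra.
    + split; [tauto |]. intros x. apply classic.
  - intros x y Hxy. destruct (LC_neq_coef x y Hxy) as [i Hi].
    exists (cylinder (i + 1) x), (cylinder (i + 1) y).
    split; [apply iota_open_cylinder |]. split; [apply iota_open_cylinder |].
    split; [intros j _; reflexivity |]. split; [intros j _; reflexivity |].
    intros z. apply (cylinder_disjoint _ i); [lia | exact Hi].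
Qed.
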